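(* Let $A\in\mathbb{R}^{n\times n}$ be a lower Hessenberg invertible M-matrix. Define the Gauss--Seidel splitting $M_{GS}=\operatorname{tril}(A)$, $N_{GS}=M_{GS}-A$, $P_{GS}=M_{GS}^{-1}N_{GS}$; the anti-Gauss--Seidel splitting $M_{AGS}=\operatorname{triu}(A)$, $N_{AGS}=M_{AGS}-A$, $P_{AGS}=M_{AGS}^{-1}N_{AGS}$; and, for $S$ the stair matrix of first order or of second order generated by $A$, the staircase splitting $M_S=S$, $N_S=M_S-A$, $P_S=M_S^{-1}N_S$. Then \[ \rho(P_{GS}) \geq \rho(P_S) \geq \rho(P_{AGS}). \]
   Context: $A$ is lower Hessenberg if $A_{ij}=0$ whenever $j>i+1$. $\operatorname{tril}(A)$ (resp. $\operatorname{triu}(A)$) is the lower (resp. upper) triangular part of $A$ including the diagonal. Let $\operatorname{tridiag}(A)$ be the tridiagonal matrix keeping the subdiagonal, diagonal and superdiagonal entries of $A$ and zeroing the rest. The stair matrix of first order generated by $A$ is obtained from $\operatorname{tridiag}(A)$ by setting the entries $(i,i-1)$ and $(i,i+1)$ (when they exist) to zero for every odd $i$; the stair matrix of second order is obtained from $\operatorname{tridiag}(A)$ by setting the entries $(i,i-1)$ and $(i,i+1)$ (when they exist) to zero for every even $i$. $\rho(\cdot)$ denotes the spectral radius. *)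

From HB Require Import structures.
From mathcomp Require Import all_boot all_order all_algebra.
From mathcomp Require Import boolp classical_sets reals complex.
Set Implicit Arguments. Unset Strict Implicit. Unset Printing Implicit Defensive.
Import Order.TTheory GRing.Theory Num.Theory.
Local Open Scope ring_scope.
Local Open Scope classical_set_scope.

Section Defs.
Variable R : realType.
Variable n : nat.
Implicit Types A B : 'M[R]_n.

Definition spectrum A : set R[i] :=
  [set z | eigenvalue (map_mx (real_complex R) A) z].

Definition spectral_radius A : R :=
  sup [set Normc.normc z | z in spectrum A].

Definition nonneg_mx B : Prop := forall i j, 0 <= B i j.

Definition invertible_Mmatrix A : Prop :=
  exists (s : R) (B : 'M[R]_n),
    nonneg_mx B /\ spectral_radius B < s /\ A = s%:M - B.

Definition lower_hessenberg A : Prop :=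
  forall i j : 'I_n, (i.+1 < j)%N -> A i j = 0.

Definition tril A : 'M[R]_n := \matrix_(i, j) (if (j <= i)%N then A i j else 0).
Definition triu A : 'M[R]_n := \matrix_(i, j) (if (i <= j)%N then A i j else 0).

Definition tridiag_pos (i j : nat) : bool := [|| i == j, i == j.+1 | j == i.+1].

(* The paper indexes rows from 1; row (0-based) i is the
   paper's row i+1.  First order: off-diagonal entries zeroed in rows with
   odd 1-based index, i.e. kept only in rows with odd 0-based index.
   Second order: off-diagonal entries zeroed in rows with even 1-based index,
   i.e. kept only in rows with even 0-based index. *)
Definition stair1 A : 'M[R]_n :=
  \matrix_(i, j) (if (i == j :> nat) || (tridiag_pos i j && odd i) then A i j else 0).
Definition stair2 A : 'M[R]_n :=
  \matrix_(i, j) (if (i == j :> nat) || (tridiag_pos i j && ~~ odd i) then A i j else 0).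

Definition iter_mx (M A : 'M[R]_n) : 'M[R]_n := invmx M *m (M - A).

End Defs.

(* Write A = s I - B with B >= 0 and s > rho(B). Then A is a Z-matrix with a
   positive row vector y such that y A > 0 (A is semipositive). Each splitting
   A = M - N of the theorem keeps the diagonal of A in M, so M is a Z-matrix
   and N >= 0, and rho(M^-1 N) is controlled by the pencil c M - N:
   - if c M - N is semipositive, every generalized eigenvalue z (u N = z u M)
     has |z| <= c, since |u| (|z| M - N) <= 0 while |z| M - N is again a
     semipositive, hence monotone, Z-matrix;
   - if rho(M^-1 N) < c <= 1, the certificate of 1 M - N = A continues to one
     of c M - N: t M - N stays nonsingular on [c, 1], and the column sums of
     its inverse, rational in t, cannot leave the positive orthant, because
     wherever they are >= 0 they certify semipositivity, which forces > 0.
   The entries of c M - N are c^[A_ij is kept in M] A_ij. For A lower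
   Hessenberg and c <= 1, reweighting a certificate of the Gauss-Seidel pencil
   by the diagonal c^(i/2) (or c^((i+1)/2)) yields one of a staircase pencil,
   and likewise from a staircase pencil to the anti-Gauss-Seidel one; so each
   spectral radius in the chain is at most the previous one. *)

From mathcomp Require Import all_boot all_order all_algebra.
From mathcomp Require Import classical_sets reals complex.
From mathcomp Require Import polyrcf ring lra zify.
Import Order.TTheory GRing.Theory Num.Theory.
Set Implicit Arguments. Unset Strict Implicit. Unset Printing Implicit Defensive.
Local Open Scope ring_scope.

Definition invmx_colsum (F : comUnitRingType) (n : nat) (Z : 'M[F]_n) :
  'rV[F]_n := const_mx 1 *m invmx Z.

Lemma invmx_colsumK (F : comUnitRingType) (n : nat) (Z : 'M[F]_n) :
  Z \in unitmx -> invmx_colsum Z *m Z = const_mx 1.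
Proof. by move=> Zu; rewrite -mulmxA mulVmx ?mulmx1. Qed.

Section Zmatrices.
Variables (R : realFieldType) (n : nat).
Implicit Types (Z : 'M[R]_n) (v y : 'rV[R]_n).

Definition Zmatrix Z := forall i j, i != j -> Z i j <= 0.
Definition pos_rv v := forall j, 0 < v 0 j.
Definition semipositive Z := exists2 y, pos_rv y & pos_rv (y *m Z).

Lemma semipos_Zmatrix_monotone Z v : Zmatrix Z -> semipositive Z ->
  (forall j, 0 <= (v *m Z) 0 j) -> forall i, 0 <= v 0 i.
Proof.
move=> ZZ [y y_gt0 yZ_gt0] vZ_ge0 i0.
have [j _ j_min] := arg_minP (fun i => v 0 i / y 0 i) (isT : predT i0).
set m := v 0 j / y 0 j.
have le_my i : m * y 0 i <= v 0 i by rewrite -ler_pdivlMr //; apply: j_min.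
have eq_my : v 0 j = m * y 0 j by rewrite /m divfK // gt_eqF.
suff m_ge0 : 0 <= m by apply: le_trans (le_my i0); rewrite mulr_ge0 // ltW.
rewrite -(pmulr_rge0 _ (yZ_gt0 j)) mulrC; apply: le_trans (vZ_ge0 j) _.
rewrite !mxE mulr_sumr; apply: ler_sum => i _; rewrite mulrA.
have [->|ij] := eqVneq i j; first by rewrite eq_my.
by rewrite ler_wnM2r // ZZ.
Qed.

Lemma Zmatrix_pos_rv Z v : Zmatrix Z -> (forall i, 0 <= v 0 i) ->
  pos_rv (v *m Z) -> pos_rv v.
Proof.
move=> ZZ v_ge0 vZ_gt0 j; rewrite lt_def v_ge0 andbT; apply/eqP => vj0.
have := vZ_gt0 j; rewrite mxE (bigD1 j) //= vj0 mul0r add0r ltNge.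
by rewrite sumr_le0 // => i ij; rewrite mulr_ge0_le0 // ZZ.
Qed.

Lemma semipos_Zmatrix_unit Z : Zmatrix Z -> semipositive Z -> Z \in unitmx.
Proof.
move=> ZZ semiZ; rewrite unitmxE unitfE; apply/negP => /det0P [u u_neq0 uZ0].
have ge0 v : v *m Z = 0 -> forall i, 0 <= v 0 i.
  by move=> vZ0; apply: (semipos_Zmatrix_monotone ZZ semiZ) => j; rewrite vZ0 mxE.
have Nu_ge0 : forall i, 0 <= (- u) 0 i by apply: ge0; rewrite mulNmx uZ0 oppr0.
move/negP: u_neq0; apply; apply/eqP/rowP => i; apply/eqP.
by have := Nu_ge0 i; rewrite !mxE oppr_ge0 eq_le => ->; rewrite ge0.
Qed.

Lemma semipos_Zmatrix_invmx_colsum_gt0 Z : Zmatrix Z -> semipositive Z ->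
  pos_rv (invmx_colsum Z).
Proof.
move=> ZZ semiZ; have wZ := invmx_colsumK (semipos_Zmatrix_unit ZZ semiZ).
apply: (Zmatrix_pos_rv ZZ); last by move=> j; rewrite wZ mxE ltr01.
by apply: (semipos_Zmatrix_monotone ZZ semiZ) => j; rewrite wZ mxE ler01.
Qed.

Lemma Zmatrix_invmx_colsum_ge0_semipos Z : Zmatrix Z -> Z \in unitmx ->
  (forall i, 0 <= invmx_colsum Z 0 i) -> semipositive Z.
Proof.
move=> ZZ Zu w_ge0; have wZ_gt0 : pos_rv (invmx_colsum Z *m Z).
  by move=> j; rewrite invmx_colsumK // mxE ltr01.
by exists (invmx_colsum Z) => //; apply: (Zmatrix_pos_rv ZZ).
Qed.

Lemma semipositive_diag_scale Z1 Z2 (e : 'I_n -> R) : semipositive Z1 ->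
  (forall i, 0 < e i) -> (forall i j, e j * Z1 i j <= e i * Z2 i j) ->
  semipositive Z2.
Proof.
move=> [y y_gt0 yZ1_gt0] e_gt0 le_Z12; exists (\row_i (y 0 i * e i)).
  by move=> i; rewrite mxE mulr_gt0.
move=> j; apply: lt_le_trans (_ : 0 < e j * (y *m Z1) 0 j) _.
  exact: mulr_gt0.
rewrite !mxE mulr_sumr; apply: ler_sum => i _; rewrite mxE mulrCA -mulrA.
by apply: ler_wpM2l; [exact: ltW | exact: le_Z12].
Qed.

End Zmatrices.

Section Pencil.
Variables (R : realFieldType) (n : nat) (M N : 'M[R]_n).
Hypotheses (ZM : Zmatrix M) (N_ge0 : forall i j, 0 <= N i j).

Lemma pencil_Zmatrix t : 0 <= t -> Zmatrix (t *: M - N).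
Proof.
move=> t_ge0 i j ij; rewrite !mxE subr_le0.
by apply: le_trans (N_ge0 i j); rewrite mulr_ge0_le0 // ZM.
Qed.

Lemma pencil_pos_rv_mulM t y : 0 < t -> pos_rv y ->
  pos_rv (y *m (t *: M - N)) -> pos_rv (y *m M).
Proof.
move=> t_gt0 y_gt0 yZ_gt0 j.
have yN_ge0 : 0 <= (y *m N) 0 j.
  by rewrite mxE sumr_ge0 // => i _; rewrite mulr_ge0 // ltW.
have := yZ_gt0 j; rewrite mulmxBr -scalemxAr.
move: (y *m M) (y *m N) yN_ge0 => yM yN yN_ge0; rewrite !mxE => yZj.
by rewrite -(pmulr_rgt0 _ t_gt0); lra.
Qed.

Lemma pencil_semipos_unit t : 0 < t -> semipositive (t *: M - N) -> M \in unitmx.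
Proof.
move=> t_gt0 [y y_gt0 yZ_gt0]; apply: (semipos_Zmatrix_unit ZM).
by exists y => //; apply: pencil_pos_rv_mulM yZ_gt0.
Qed.

Lemma pencil_semipos_ge a b : 0 < a -> a <= b ->
  semipositive (a *: M - N) -> semipositive (b *: M - N).
Proof.
move=> a_gt0 le_ab [y y_gt0 yZ_gt0]; exists y => // j.
have := pencil_pos_rv_mulM a_gt0 y_gt0 yZ_gt0 j; have := yZ_gt0 j.
rewrite !mulmxBr -!scalemxAr; move: (y *m M) (y *m N) => yM yN.
rewrite !mxE => yZj yMj.
have : 0 <= (b - a) * yM 0 j by rewrite mulr_ge0 ?subr_ge0 // ltW.
lra.
Qed.

End Pencil.

Section ComplexEigenvalues.
Variables (R : rcfType) (n : nat).
Local Notation normc := (@Normc.normc R).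
Local Open Scope complex_scope.

Lemma normc_ge0 (x : R[i]) : 0 <= normc x.
Proof. exact: (@normr_ge0 _ (Rcomplex R)). Qed.

Lemma normc_real (r : R) : normc r%:C = `|r|.
Proof. by rewrite /Normc.normc /= expr0n /= addr0 sqrtr_sqr. Qed.

Lemma normc_sum (I : Type) (s : seq I) (P : pred I) (F : I -> R[i]) :
  normc (\sum_(i <- s | P i) F i) <= \sum_(i <- s | P i) normc (F i).
Proof. exact: (@ler_norm_sum _ (Rcomplex R)). Qed.

Variables (M N : 'M[R]_n).
Hypotheses (ZM : Zmatrix M) (N_ge0 : forall i j, 0 <= N i j).

Lemma pencil_eigen_normc_le0 (u : 'rV[R[i]]_n) z :
  u *m map_mx (real_complex R) N = z *: (u *m map_mx (real_complex R) M) ->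
  forall j, ((\row_i normc (u 0 i)) *m (normc z *: M - N)) 0 j <= 0.
Proof.
move=> eig j; set r := normc z.
have col_j : z * (u 0 j * (M j j)%:C) =
    \sum_i u 0 i * (N i j)%:C - z * \sum_(i | i != j) u 0 i * (M i j)%:C.
  have /matrixP/(_ 0 j) := eig; rewrite !mxE.
  under eq_bigr do rewrite mxE.
  under [in RHS]eq_bigr do rewrite mxE.
  by move=> ->; rewrite (bigD1 j) //= mulrDr addrK.
have normN : normc (\sum_i u 0 i * (N i j)%:C) <= \sum_i normc (u 0 i) * N i j.
  apply: le_trans (normc_sum _ _ _) _; apply: ler_sum => i _.
  by rewrite Normc.normcM normc_real ger0_norm.
have normM : normc (\sum_(i | i != j) u 0 i * (M i j)%:C) <=
    - \sum_(i | i != j) normc (u 0 i) * M i j.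
  rewrite -sumrN; apply: le_trans (normc_sum _ _ _) _; apply: ler_sum => i ij.
  by rewrite Normc.normcM normc_real ler0_norm ?ZM // mulrN.
have key : r * (normc (u 0 j) * M j j) <=
    \sum_i normc (u 0 i) * N i j - r * \sum_(i | i != j) normc (u 0 i) * M i j.
  apply: le_trans (_ : r * (normc (u 0 j) * `|M j j|) <= _).
    by rewrite ler_wpM2l ?normc_ge0 // ler_wpM2l ?normc_ge0 // ler_norm.
  rewrite /r -normc_real -!Normc.normcM col_j; apply: le_trans (le_normcD _ _) _.
  rewrite normcN Normc.normcM -mulrN; apply: lerD => //.
  by rewrite ler_wpM2l ?normc_ge0.
rewrite mxE; under eq_bigr do rewrite !mxE mulrBr mulrCA.
rewrite sumrB -mulr_sumr (bigD1 j) //= mulrDr; lra.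
Qed.

Lemma pencil_eigen_normc_le (u : 'rV[R[i]]_n) z c :
  0 < c -> semipositive (c *: M - N) -> u != 0 ->
  u *m map_mx (real_complex R) N = z *: (u *m map_mx (real_complex R) M) ->
  normc z <= c.
Proof.
move=> c_gt0 semi_c u_neq0 eig; rewrite leNgt; apply/negP => c_lt_r.
have ZZ := pencil_Zmatrix ZM N_ge0 (ltW (lt_trans c_gt0 c_lt_r)).
have semi_r := pencil_semipos_ge N_ge0 c_gt0 (ltW c_lt_r) semi_c.
have nu_le0 : forall i, 0 <= (- \row_i normc (u 0 i)) 0 i.
  apply: (semipos_Zmatrix_monotone ZZ semi_r) => j.
  by rewrite mulNmx mxE oppr_ge0 pencil_eigen_normc_le0.
case/rV0Pn: u_neq0 => i; apply/negP; rewrite negbK; apply/eqP/Normc.eq0_normc.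
have := nu_le0 i; rewrite !mxE oppr_ge0 => nu_i_le0.
by apply/eqP; rewrite eq_le nu_i_le0 normc_ge0.
Qed.

End ComplexEigenvalues.

Section PolynomialContinuation.
Variable R : rcfType.

Lemma polys_gt0_continuation (I : finType) (f : I -> {poly R}) (a b : R) :
  a <= b -> (forall i, 0 < (f i).[b]) ->
  (forall t, a <= t <= b ->
     (forall i, 0 <= (f i).[t]) -> forall i, 0 < (f i).[t]) ->
  forall i, 0 < (f i).[a].
Proof.
move=> le_ab f_b_gt0 f_gt0_closed.
pose Q := \prod_i f i.
have Q_b_gt0 : 0 < Q.[b] by rewrite horner_prod prodr_gt0.
have Q_neq0 : Q != 0 by apply: contraTneq Q_b_gt0 => ->; rewrite horner0 ltxx.
(* [t] is the largest root of [Q] in [`]a, b[], or [a] if there is none. *)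
have := prev_root_in Q a b; rewrite (min_l le_ab) in_itv /= => t_in.
set t := prev_root Q a b in t_in *.
have f_t_ge0 i : 0 <= (f i).[t].
  rewrite leNgt; apply/negP => f_t_lt0; case/andP: t_in => _ le_tb.
  have sign_change : (f i).[t] <= 0 <= (f i).[b] by rewrite !ltW.
  have [x /andP[le_tx le_xb] f_x] := poly_ivt le_tb sign_change.
  have x_in : x \in `]t, b[.
    rewrite in_itv /= !lt_neqAle le_tx le_xb !andbT.
    apply/andP; split.
      by apply: contraTneq f_x => <-; rewrite rootE lt_eqF.
    by apply: contraTneq f_x => ->; rewrite rootE gt_eqF.
  have /negP := prev_noroot x_in; apply.
  by rewrite rootE horner_prod; apply/prodf_eq0; exists i => //; apply/eqP.
have f_t_gt0 := f_gt0_closed t t_in f_t_ge0.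
suff <- : t = a by [].
have : 0 < Q.[t] by rewrite horner_prod prodr_gt0.
rewrite /t; case: prev_rootP => [Q0 | y _ -> _ _ | c _ -> _ _].
- by rewrite Q0 eqxx in Q_neq0.
- by rewrite ltxx.
- by rewrite (min_l le_ab).
Qed.

End PolynomialContinuation.

Lemma row_adj_mul_det (F : fieldType) (m : nat) (Z : 'M[F]_m) (v : 'rV[F]_m) j :
  Z \in unitmx -> (v *m \adj Z) 0 j * \det Z = (v *m invmx Z) 0 j * \det Z ^+ 2.
Proof.
move=> Zu; have det_neq0 : \det Z != 0 by rewrite -unitfE -unitmxE.
by rewrite /invmx Zu -scalemxAr [in RHS]mxE; field.
Qed.

Lemma pencil_invmx_colsum_poly (F : fieldType) (n : nat) (M N : 'M[F]_n) :
  exists f : 'I_n -> {poly F}, forall t j, t *: M - N \in unitmx ->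
    (f j).[t] = invmx_colsum (t *: M - N) 0 j * \det (t *: M - N) ^+ 2.
Proof.
pose Zp : 'M[{poly F}]_n := 'X *: map_mx polyC M - map_mx polyC N.
have Zp_t t : map_mx (horner_eval t) Zp = t *: M - N.
  by apply/matrixP => i j; rewrite !mxE /horner_eval !hornerE.
exists (fun j => ((const_mx 1 : 'rV_n) *m \adj Zp) 0 j * \det Zp) => t j Zt_unit.
rewrite -row_adj_mul_det // hornerM -Zp_t det_map_mx -map_mx_adj.
congr (_ * _); rewrite !mxE horner_sum.
by apply: eq_bigr => i _; rewrite !mxE hornerM hornerC.
Qed.

Section PencilContinuation.
Variables (R : rcfType) (n : nat) (M N : 'M[R]_n).
Hypotheses (ZM : Zmatrix M) (N_ge0 : forall i j, 0 <= N i j).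

Lemma pencil_semipos_continuation a b : 0 <= a -> a <= b ->
  (forall t, a <= t <= b -> \det (t *: M - N) != 0) ->
  semipositive (b *: M - N) -> semipositive (a *: M - N).
Proof.
move=> a_ge0 le_ab det_neq0 semi_b; have [f f_t] := pencil_invmx_colsum_poly M N.
have Z_t t : a <= t <= b -> Zmatrix (t *: M - N).
  by case/andP=> le_at _; apply: pencil_Zmatrix (le_trans a_ge0 le_at).
have unit_t t : a <= t <= b -> t *: M - N \in unitmx.
  by move=> t_in; rewrite unitmxE unitfE det_neq0.
have sqr_det_gt0 t : a <= t <= b -> 0 < \det (t *: M - N) ^+ 2.
  by move=> t_in; rewrite exprn_even_gt0 ?det_neq0.
have f_gt0E t j : a <= t <= b ->
    (0 < (f j).[t]) = (0 < invmx_colsum (t *: M - N) 0 j).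
  by move=> t_in; rewrite f_t ?unit_t // pmulr_lgt0 ?sqr_det_gt0.
have semi_t t : a <= t <= b -> (forall j, 0 <= (f j).[t]) ->
    semipositive (t *: M - N).
  move=> t_in f_ge0; apply: (Zmatrix_invmx_colsum_ge0_semipos (Z_t _ t_in)).
    exact: unit_t.
  by move=> j; have := f_ge0 j; rewrite f_t ?unit_t // pmulr_lge0 ?sqr_det_gt0.
have a_in : a <= a <= b by rewrite lexx le_ab.
have b_in : a <= b <= b by rewrite le_ab lexx.
apply: (semi_t _ a_in) => j; apply/ltW/(polys_gt0_continuation le_ab).
  move=> i; rewrite f_gt0E //.
  exact: semipos_Zmatrix_invmx_colsum_gt0 (Z_t _ b_in) semi_b i.
move=> t t_in f_ge0 i; rewrite f_gt0E //.
exact: semipos_Zmatrix_invmx_colsum_gt0 (Z_t _ t_in) (semi_t _ t_in f_ge0) i.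
Qed.

End PencilContinuation.

Section SpectralRadius.
Variables (R : realType) (n : nat).
Implicit Types G : 'M[R]_n.
Local Notation normc := (@Normc.normc R).
Local Open Scope classical_set_scope.
Local Open Scope complex_scope.

Lemma spectrum_normc_le_sum G z :
  spectrum G z -> normc z <= \sum_i \sum_k `|G i k|.
Proof.
move=> /eigenvalueP [v eig /rV0Pn [i0 v_i0_neq0]].
have [j _ j_max] := arg_maxP (fun i => normc (v 0 i)) (isT : predT i0).
have v_j_gt0 : 0 < normc (v 0 j).
  apply: lt_le_trans (j_max i0 isT); rewrite lt_def normc_ge0 andbT.
  by apply: contra v_i0_neq0 => /eqP/Normc.eq0_normc ->.
have col_j : z * v 0 j = \sum_i v 0 i * (G i j)%:C.
  have /matrixP/(_ 0 j) := eig; rewrite !mxE => <-.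
  by apply: eq_bigr => i _; rewrite mxE.
rewrite -(ler_pM2r v_j_gt0) -Normc.normcM col_j mulr_suml.
apply: le_trans (normc_sum _ _ _) _; apply: ler_sum => i _.
rewrite Normc.normcM normc_real mulrC ler_pM ?normc_ge0 //; last exact: j_max.
by rewrite (bigD1 j) //= lerDl sumr_ge0.
Qed.

Lemma normc_le_spectral_radius G z : spectrum G z -> normc z <= spectral_radius G.
Proof.
move=> Gz; apply: ub_le_sup; last by exists z.
exists (\sum_i \sum_k `|G i k|) => _ [w Gw <-]; exact: spectrum_normc_le_sum.
Qed.

Lemma spectral_radius_ge0 G : 0 <= spectral_radius G.
Proof.
rewrite /spectral_radius.
have [->|/set0P [_ [z Gz _]]] := eqVneq [set normc z | z in spectrum G] set0.
  by rewrite sup0.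
by apply: le_trans (normc_le_spectral_radius Gz); apply: normc_ge0.
Qed.

Lemma spectral_radius_le G c : 0 <= c ->
  (forall z, spectrum G z -> normc z <= c) -> spectral_radius G <= c.
Proof.
move=> c_ge0 le_c; rewrite /spectral_radius.
have [->|ne] := eqVneq [set normc z | z in spectrum G] set0.
  by rewrite sup0.
by apply: ge_sup; [apply/set0P | move=> _ [z Gz <-]; apply: le_c].
Qed.

Lemma spectrum_invmx_mul_gen_eigen (M N : 'M[R]_n) z : M \in unitmx ->
  spectrum (invmx M *m N) z ->
  exists2 u : 'rV[R[i]]_n, u != 0 &
    u *m map_mx (real_complex R) N = z *: (u *m map_mx (real_complex R) M).
Proof.
move=> Mu /eigenvalueP [v eig v_neq0].
have Mcu : map_mx (real_complex R) M \in unitmx.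
  by rewrite unitmxE det_map_mx rmorph_unit // -unitmxE.
exists (v *m invmx (map_mx (real_complex R) M)).
  apply: contraNneq v_neq0 => /(congr1 (mulmx^~ (map_mx (real_complex R) M))) /=.
  by rewrite mulmxKV // mul0mx => ->.
by rewrite mulmxKV // -eig map_mxM map_invmx mulmxA.
Qed.

Lemma real_gen_eigen_le_spectral_radius (M N : 'M[R]_n) (v : 'rV[R]_n) t :
  M \in unitmx -> v != 0 -> v *m N = t *: (v *m M) -> `|t| <= spectral_radius (invmx M *m N).
Proof.
move=> Mu v_neq0 eig; rewrite -normc_real; apply: normc_le_spectral_radius.
apply/eigenvalueP; exists (map_mx (real_complex R) (v *m M)).
  by rewrite -map_mxM mulmxA mulmxK // eig map_mxZ.
rewrite map_mx_eq0; apply: contraNneq v_neq0 => /(congr1 (mulmx^~ (invmx M))) /=.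
by rewrite mulmxK // mul0mx => ->.
Qed.

End SpectralRadius.

Section PencilSpectralRadius.
Variables (R : realType) (n : nat) (M N : 'M[R]_n).
Hypotheses (ZM : Zmatrix M) (N_ge0 : forall i j, 0 <= N i j).

Lemma pencil_spectral_radius_le c : 0 < c -> semipositive (c *: M - N) ->
  spectral_radius (invmx M *m N) <= c.
Proof.
move=> c_gt0 semi_c; apply: spectral_radius_le (ltW c_gt0) _ => z.
have Mu := pencil_semipos_unit ZM N_ge0 c_gt0 semi_c.
move=> /(spectrum_invmx_mul_gen_eigen Mu) [u u_neq0 eig].
exact: (pencil_eigen_normc_le ZM N_ge0 c_gt0 semi_c u_neq0 eig).
Qed.

Lemma spectral_radius_lt_pencil_semipos a b :
  spectral_radius (invmx M *m N) < a -> a <= b -> semipositive (b *: M - N) -> semipositive (a *: M - N).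
Proof.
move=> rho_lt_a le_ab semi_b.
have a_gt0 := le_lt_trans (spectral_radius_ge0 _) rho_lt_a.
have Mu := pencil_semipos_unit ZM N_ge0 (lt_le_trans a_gt0 le_ab) semi_b.
apply: (pencil_semipos_continuation ZM N_ge0 (ltW a_gt0) le_ab) => // t.
case/andP=> le_at _; apply/negP => /det0P [v v_neq0].
rewrite mulmxBr -scalemxAr => /eqP; rewrite subr_eq0 eq_sym => /eqP eig.
have := real_gen_eigen_le_spectral_radius Mu v_neq0 eig.
by rewrite gtr0_norm ?(lt_le_trans a_gt0) // leNgt (lt_le_trans rho_lt_a).
Qed.

End PencilSpectralRadius.

Section Mmatrices.
Variables (R : realType) (n : nat).
Implicit Types A : 'M[R]_n.

Lemma invertible_Mmatrix_Zmatrix A : invertible_Mmatrix A -> Zmatrix A.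
Proof.
case=> s [B [B_ge0 [_ ->]]] i j ij.
by rewrite !mxE (negbTE ij) mulr0n sub0r oppr_le0.
Qed.

Lemma invertible_Mmatrix_semipos A : invertible_Mmatrix A -> semipositive A.
Proof.
case=> s [B [B_ge0 [rho_lt_s ->]]].
have s_ge0 : 0 <= s := le_trans (spectral_radius_ge0 B) (ltW rho_lt_s).
have ZI : Zmatrix (1%:M : 'M[R]_n) by move=> i j ij; rewrite mxE (negbTE ij).
have colsum_le j : ((const_mx 1 : 'rV_n) *m B) 0 j <= \sum_i \sum_k B i k.
  rewrite mxE; apply: ler_sum => i _.
  by rewrite mxE mul1r (bigD1 j) //= lerDl sumr_ge0.
have sum_ge0 : 0 <= \sum_i \sum_k B i k by do 2 apply: sumr_ge0 => ? _.
pose b := s + 1 + \sum_i \sum_k B i k.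
rewrite -scalemx1; apply: (spectral_radius_lt_pencil_semipos ZI B_ge0 (b := b)).
- by rewrite invmx1 mul1mx.
- by rewrite /b; lra.
exists (const_mx 1) => j; first by rewrite mxE.
have := colsum_le j; rewrite mulmxBr -scalemxAr mulmx1.
move: (const_mx 1 *m B) => w; rewrite /b !mxE; lra.
Qed.

End Mmatrices.

Section Masks.
Variables (R : realType) (n : nat) (A : 'M[R]_n).
Hypotheses (ZA : Zmatrix A) (semi_A : semipositive A).
Hypothesis hessA : lower_hessenberg A.

Definition mask_mx (keep : 'I_n -> 'I_n -> bool) : 'M[R]_n :=
  \matrix_(i, j) (if keep i j then A i j else 0).

Lemma mask_Zmatrix keep : Zmatrix (mask_mx keep).
Proof. by move=> i j ij; rewrite mxE; case: ifP => // _; apply: ZA. Qed.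

Lemma mask_sub_ge0 (keep : 'I_n -> 'I_n -> bool) :
  (forall i, keep i i) -> forall i j, 0 <= (mask_mx keep - A) i j.
Proof.
move=> keep_diag i j; rewrite !mxE.
have [->|ij] := eqVneq i j; first by rewrite keep_diag subrr.
by case: ifP => _; rewrite ?subrr // sub0r oppr_ge0 ZA.
Qed.

Lemma mask_pencilE keep c i j :
  (c *: mask_mx keep - (mask_mx keep - A)) i j = c ^+ keep i j * A i j.
Proof. by rewrite !mxE; case: (keep i j) => /=; rewrite ?expr0 ?expr1; ring. Qed.

Lemma mask_spectral_radius_le (keep1 keep2 : 'I_n -> 'I_n -> bool)
    (f : nat -> nat) :
  (forall i, keep1 i i) -> (forall i, keep2 i i) ->
  (forall i j : 'I_n, i != j -> (j <= i.+1)%N ->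
     (f j + keep1 i j <= f i + keep2 i j)%N) ->
  spectral_radius (iter_mx (mask_mx keep2) A) <=
    spectral_radius (iter_mx (mask_mx keep1) A).
Proof.
move=> keep1_diag keep2_diag le_f.
have pencil1 keep : 1 *: mask_mx keep - (mask_mx keep - A) = A.
  by rewrite scale1r opprB addrC subrK.
have N1_ge0 := mask_sub_ge0 keep1_diag; have N2_ge0 := mask_sub_ge0 keep2_diag.
apply/ler_addgt0Pr => e e_gt0; set c := _ + e.
have rho1_lt_c : spectral_radius (iter_mx (mask_mx keep1) A) < c by rewrite ltrDl.
have c_gt0 : 0 < c := le_lt_trans (spectral_radius_ge0 _) rho1_lt_c.
apply: (pencil_spectral_radius_le (mask_Zmatrix keep2) N2_ge0 c_gt0).
have [le1c|ltc1] := lerP 1 c.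
  by apply: (pencil_semipos_ge N2_ge0 ltr01 le1c); rewrite pencil1.
have semi1 : semipositive (c *: mask_mx keep1 - (mask_mx keep1 - A)).
  apply: (spectral_radius_lt_pencil_semipos (mask_Zmatrix keep1) N1_ge0).
  - exact: rho1_lt_c.
  - exact: ltW ltc1.
  - by rewrite pencil1.
apply: (semipositive_diag_scale (e := fun i => c ^+ f i) semi1).
  by move=> i; rewrite exprn_gt0.
move=> i j; rewrite !mask_pencilE.
have [<-|ij] := eqVneq i j; first by rewrite keep1_diag keep2_diag.
have [le_j|lt_j] := leqP j i.+1; last by rewrite hessA // !mulr0.
rewrite !mulrA -!exprD; apply: (ler_wnM2r (ZA ij)).
exact: (ler_wiXn2l (ltW c_gt0) (ltW ltc1) (le_f _ _ ij le_j)).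
Qed.

End Masks.

Theorem theorem4 (R : realType) (n : nat) (A : 'M[R]_n) :
  lower_hessenberg A -> invertible_Mmatrix A ->
  (spectral_radius (iter_mx (tril A) A) >= spectral_radius (iter_mx (stair1 A) A) /\
   spectral_radius (iter_mx (stair1 A) A) >= spectral_radius (iter_mx (triu A) A)) /\
  (spectral_radius (iter_mx (tril A) A) >= spectral_radius (iter_mx (stair2 A) A) /\
   spectral_radius (iter_mx (stair2 A) A) >= spectral_radius (iter_mx (triu A) A)).
Proof.
move=> hessA MA.
have le_mask := mask_spectral_radius_le (invertible_Mmatrix_Zmatrix MA)
  (invertible_Mmatrix_semipos MA) hessA.
have -> : tril A = mask_mx A (fun i j : 'I_n => (j <= i)%N) by [].
have -> : triu A = mask_mx A (fun i j : 'I_n => (i <= j)%N) by [].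
have -> : stair1 A = mask_mx A (fun i j : 'I_n =>
  (i == j :> nat) || (tridiag_pos i j && odd i)) by [].
have -> : stair2 A = mask_mx A (fun i j : 'I_n =>
  (i == j :> nat) || (tridiag_pos i j && ~~ odd i)) by [].
split; split.
- by apply: (le_mask _ _ half) => *; rewrite /tridiag_pos; lia.
- by apply: (le_mask _ _ uphalf) => *; rewrite /tridiag_pos; lia.
- by apply: (le_mask _ _ uphalf) => *; rewrite /tridiag_pos; lia.
- by apply: (le_mask _ _ half) => *; rewrite /tridiag_pos; lia.
Qed.
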